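(* Let $\mathcal{M}$ be a set of mappings over a schema $\Sigma$, $\mathcal{D}$ a database instance of $\Sigma$, and $q(\vec x)\leftarrow L_1(\vec v_1),\dots,L_n(\vec v_n)$ a conjunctive query such that $\vec x=\bigcup_{i=1}^n\vec v_i$ (as sets of variables). Then $$|\mathrm{unf}(q(\vec x),\mathcal{M})^{\mathcal{D}}|=\sum_{q_u\in\mathrm{unf}(q,\mathrm{wrap}(\mathcal{M}))}|q_u(\vec x)^{\mathcal{D}}|,$$ where the sum ranges over the conjunctive queries (rules) $q_u$ of the unfolding of $q$ with respect to $\mathrm{wrap}(\mathcal{M})$.
   Context: A mapping is $L(\vec f(\vec x))\leftsquigarrow V(\vec x)$ with $L$ a concept or role name, $\vec f(\vec x)$ a tuple of terms each of the form $g(\vec y)$ ($g$ a function symbol, $\vec y\subseteq\vec x$), and $V$ a view name with extension $V^{\mathcal{D}}$ given by a query over $\Sigma$. Signature: $\mathrm{sign}(m)=(L,\vec f)$. Unfolding of a CQ $q(\vec x)\leftarrow L_1(\vec v_1),\dots,L_n(\vec v_n)$: the non-recursive Datalog query $(q_{\mathrm{unf}}(\vec x),\Pi)$ where $\Pi$ is a minimal (up to renaming) set of rules containing, for every tuple $(m_1,\dots,m_n)$ of mappings with $m_i=L_i(\vec f_i(\vec x_i))\leftsquigarrow V_i(\vec z_i)$ and every mgu $\sigma$ of $\{(L_i(\vec v_i),L_i(\vec f_i(\vec x_i)))\}$, the rule $q_{\mathrm{unf}}(\sigma(\vec x))\leftarrow V_1(\sigma(\vec z_1)),\dots,V_n(\sigma(\vec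 z_n))$; answers are (sets of) tuples of terms $f(\vec a)$. Wrap: for each signature $(L,\vec f)$, if the mappings of that signature are $\{L(\vec f(\vec v_i))\leftsquigarrow V_i(\vec v_i)\mid 1\le i\le k\}$, they are replaced by the single mapping $L(\vec f(\vec v))\leftsquigarrow W(\vec v)$ with fresh variables $\vec v$ and $W$ a fresh view for the Datalog query $(W(\vec v),\{W(\vec v_i)\leftarrow V_i(\vec v_i)\}_i)$ (so $W^{\mathcal{D}}=\bigcup_iV_i^{\mathcal{D}}$); $\mathrm{wrap}(\mathcal{M})$ is the union of these over all signatures. *)

From HB Require Import structures.
From mathcomp Require Import all_boot.
From Stdlib Require List.
Set Implicit Arguments. Unset Strict Implicit. Unset Printing Implicit Defensive.

(* First-order terms over function symbols (named by nat) with leaves  *)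
(* of type X.  Open terms: X = variables; ground terms: X = constants.  *)
Inductive term (X : Type) : Type :=
  | Leaf : X -> term X
  | Fn : nat -> seq (term X) -> term X.
Arguments Leaf {X}. Arguments Fn {X}.

Fixpoint enc_term X (t : term X) : GenTree.tree X :=
  match t with Leaf x => GenTree.Leaf x | Fn g ts => GenTree.Node g (map (@enc_term X) ts) end.
Fixpoint dec_term X (t : GenTree.tree X) : term X :=
  match t with GenTree.Leaf x => Leaf x | GenTree.Node g ts => Fn g (map (@dec_term X) ts) end.
Fixpoint enc_termK X (t : term X) : dec_term (enc_term t) = t :=
  match t with
  | Leaf x => erefl
  | Fn g ts => f_equal (Fn g)
      ((fix aux ts := match ts return map (@dec_term X) (map (@enc_term X) ts) = ts with
                      | [::] => erefl | t :: ts => f_equal2 cons (enc_termK t) (aux ts) end) ts)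
  end.
HB.instance Definition _ (X : countType) := Countable.copy (term X) (can_type (@enc_termK X)).

Fixpoint tmap X Y (f : X -> Y) (t : term X) : term Y :=
  match t with Leaf x => Leaf (f x) | Fn g ts => Fn g (map (tmap f) ts) end.
Fixpoint subst X Y (s : X -> term Y) (t : term X) : term Y :=
  match t with Leaf x => s x | Fn g ts => Fn g (map (subst s) ts) end.

Definition const := nat.

(* A database instance of Sigma: each relation symbol of Sigma (named by
   nat) is interpreted by a finite relation. *)
Definition instance := nat -> seq (seq const).
(* A view definition: for each view name, a query over Sigma, given by its
   (arbitrary) semantics  D |-> V^D.  *)
Definition view_defs := nat -> instance -> seq (seq const).

(* Conjunctive queries  q(x) <- L_1(v_1), ..., L_n(v_n)                 *)
Record cq := CQ { qhead : seq nat ; qbody : seq (nat * seq nat) }.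

(* Mappings  L(g_1(y_1),...,g_k(y_k)) <~ V(z), over view names Vn      *)
Record mapping (Vn : Type) := Mapping {
  mpred : nat ;
  mhead : seq (nat * seq nat) ;     (* terms g(y): (g, y) *)
  mview : Vn ;
  mbody : seq nat
}.

Definition mapping_wf Vn (m : mapping Vn) : Prop :=
  forall t, List.In t (mhead m) -> {subset t.2 <= mbody m}.

(* signature: (L, f), function symbols recorded with their arity *)
Definition signature := (nat * seq (nat * nat))%type.
Definition sign Vn (m : mapping Vn) : signature :=
  (mpred m, [seq (t.1, size t.2) | t <- mhead m]).

(* Non-recursive Datalog rules  q(t) <- V_1(u_1), ..., V_n(u_n)         *)
Record rule (X Vn : Type) := Rule { rhead : seq (term X) ; rbody : seq (Vn * seq (term X)) }.

(* semantics: ext gives the extension V^D of each view name *)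
Definition body_sat X Vn (ext : Vn -> seq const -> Prop) (nu : X -> const) (r : rule X Vn) : Prop :=
  forall a, List.In a (rbody r) ->
    exists tup, ext a.1 tup /\ map (tmap nu) a.2 = map Leaf tup.

Definition rule_ans X Vn (ext : Vn -> seq const -> Prop) (r : rule X Vn) (t : seq (term const)) : Prop :=
  exists nu : X -> const, body_sat ext nu r /\ t = map (tmap nu) (rhead r).

Definition dl_ans X Vn (ext : Vn -> seq const -> Prop) (Pi : seq (rule X Vn)) (t : seq (term const)) : Prop :=
  exists r, List.In r Pi /\ rule_ans ext r t.

Definition rename_rule X Vn (f : X -> X) (r : rule X Vn) : rule X Vn :=
  Rule (map (tmap f) (rhead r)) [seq (a.1, map (tmap f) a.2) | a <- rbody r].
Definition variant X Vn (r1 r2 : rule X Vn) : Prop :=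
  exists f : X -> X, bijective f /\ rename_rule f r1 = r2.

(* Variables of generated rules: (None, x) for a query variable x,     *)
(* (Some i, y) for variable y of the copy of the mapping used for the  *)
(* i-th atom (mappings are renamed apart).                             *)
Definition rvar := (option nat * nat)%type.

Definition mterm (i : nat) (t : nat * seq nat) : term rvar :=
  Fn t.1 [seq Leaf (Some i, y) | y <- t.2].

Definition adm_tuple Vn (M : seq (mapping Vn)) (q : cq) (ms : seq (mapping Vn)) : Prop :=
  size ms = size (qbody q) /\ (forall m, List.In m ms -> List.In m M).

Definition unifier Vn (q : cq) (ms : seq (mapping Vn)) (s : rvar -> term rvar) : Prop :=
  forall i a m, i < size (qbody q) -> nth a (qbody q) i = a -> nth m ms i = m ->
    mpred m = a.1 /\
    [seq s (None, v) | v <- a.2] = [seq subst s (mterm i t) | t <- mhead m].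

Definition mgu Vn (q : cq) (ms : seq (mapping Vn)) (s : rvar -> term rvar) : Prop :=
  unifier q ms s /\
  forall s', unifier q ms s' -> exists rho : rvar -> term rvar, forall x, s' x = subst rho (s x).

Definition gen_rule Vn (q : cq) (ms : seq (mapping Vn)) (s : rvar -> term rvar) : rule rvar Vn :=
  Rule [seq s (None, x) | x <- qhead q]
       [seq (im.2.(mview), [seq s (Some im.1, z) | z <- im.2.(mbody)]) | im <- zip (iota 0 (size ms)) ms].

Definition is_unfolding Vn (M : seq (mapping Vn)) (q : cq) (Pi : seq (rule rvar Vn)) : Prop :=
  (forall ms s, adm_tuple M q ms -> mgu q ms s ->
     exists r, List.In r Pi /\ variant r (gen_rule q ms s)) /\
  (forall r, List.In r Pi -> exists ms s, adm_tuple M q ms /\ mgu q ms s /\ variant r (gen_rule q ms s)) /\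
  List.ForallOrdPairs (fun r1 r2 => ~ variant r1 r2) Pi.

Fixpoint sig_head (off : nat) (fs : seq (nat * nat)) : seq (nat * seq nat) :=
  match fs with
  | [::] => [::]
  | (g, a) :: fs' => (g, iota off a) :: sig_head (off + a) fs'
  end.

(* for each signature, the single mapping L(f(v)) <~ W_sig(v); the fresh
   view W for a signature is named by the signature itself *)
Definition wrap_mapping (s : signature) : mapping signature :=
  Mapping s.1 (sig_head 0 s.2) s (iota 0 (sumn [seq p.2 | p <- s.2])).

Definition wrapM (M : seq (mapping nat)) : seq (mapping signature) :=
  [seq wrap_mapping s | s <- undup [seq sign m | m <- M]].

Definition base_ext (vdef : view_defs) (D : instance) (v : nat) (tup : seq const) : Prop :=
  tup \in vdef v D.

(* extension of W_sig: the Datalog query {W(y_i) <- V_i(z_i)}_i over the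
   mappings L(f(y_i)) <~ V_i(z_i) of signature sig, where y_i is the
   concatenation of the arguments of the head terms *)
Definition wrap_ext (vdef : view_defs) (D : instance) (M : seq (mapping nat))
    (s : signature) (tup : seq const) : Prop :=
  exists m, List.In m M /\ sign m = s /\
    exists nu : nat -> const,
      [seq nu z | z <- mbody m] \in vdef (mview m) D /\
      tup = [seq nu y | y <- flatten [seq t.2 | t <- mhead m]].

Definition card_is (T : eqType) (A : T -> Prop) (n : nat) : Prop :=
  exists s : seq T, uniq s /\ (forall t, A t <-> t \in s) /\ size s = n.

(* A match of q through a tuple (m_1, ..., m_n) of mappings assigns ground terms th to the query
   variables and constants mu_i to the variables of m_i, so that L_i(th(v_i)) is the head of m_i
   under mu_i and mu_i(z_i) is a tuple of V_i.  The rule generated from the tuple and any mgu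
   answers exactly the tuples th(x) of these matches, since the mgu identifies exactly what every
   match has to identify.  Wrapping only forgets which mapping of a signature is used, so M and
   wrap(M) have matches with the same answers; for wrap(M) the tuple of mappings is determined by
   the answer, because the signature of the i-th mapping is read off the shape of th(v_i) (this is
   where x = \bigcup_i v_i is needed).  As two mgus of one tuple yield variant rules, the rules of
   unf(q, wrap(M)) have pairwise disjoint answer sets whose union is the answer set of
   unf(q, M), and all these sets are finite because their terms are built from the finitely many
   view tuples. *)

From mathcomp Require Import all_boot boolp.
From Stdlib Require List.
Set Implicit Arguments. Unset Strict Implicit. Unset Printing Implicit Defensive.

Lemma InP (T : eqType) (x : T) s : reflect (List.In x s) (x \in s).
Proof.
elim: s => [|y s IH] /=; first by right.
rewrite inE; apply: (iffP orP) => [[/eqP->|/IH]|[->|/IH]]; by [left|right|rewrite eqxx; left|right].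
Qed.

Lemma In_nth T (x0 : T) s i : i < size s -> List.In (nth x0 s i) s.
Proof. by elim: s i => //= x s IH [|i] /= Hi; [left | right; apply: IH]. Qed.

Lemma eq_In_map A B (f g : A -> B) s :
  (forall x, List.In x s -> f x = g x) -> map f s = map g s.
Proof. by elim: s => //= x s IH E; rewrite E ?IH //; [move=> y Hy; apply: E; right | left]. Qed.

Lemma ForallOrdPairs_impl_In A (R R' : A -> A -> Prop) l :
  (forall a b, List.In a l -> List.In b l -> R a b -> R' a b) ->
  List.ForallOrdPairs R l -> List.ForallOrdPairs R' l.
Proof.
move=> RR' FR; elim: FR RR' => [|a l' Fa _ IH] RR'; constructor.
  move/List.Forall_forall: Fa => Fa.
  by apply/List.Forall_forall => b Hb; apply: RR'; [left | right | exact: Fa].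
by apply: IH => x y Hx Hy; apply: RR'; right.
Qed.

Definition relabel (T : eqType) (s1 s2 : seq T) (x : T) : T :=
  if x \in s1 then nth x s2 (index x s1) else x.

Lemma relabelK (T : eqType) (s1 s2 : seq T) :
  uniq s2 -> size s1 = size s2 -> s1 =i s2 -> cancel (relabel s1 s2) (relabel s2 s1).
Proof.
move=> U2 S12 M12 x; rewrite /relabel; case Hx: (x \in s1); last by rewrite -M12 Hx.
have Hi : index x s1 < size s2 by rewrite -S12 index_mem.
by rewrite mem_nth // index_uniq // (set_nth_default x) ?nth_index // S12.
Qed.

Lemma bij_of_uniq (T : eqType) (a b : seq T) : uniq a -> uniq b -> size a = size b ->
  exists F : T -> T, bijective F /\ forall k x0, k < size a -> F (nth x0 a k) = nth x0 b k.
Proof.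
move=> Ua Ub Sab; pose U := undup (a ++ b).
pose src := a ++ [seq x <- U | x \notin a]; pose tgt := b ++ [seq x <- U | x \notin b].
have completeU c : uniq c -> uniq (c ++ [seq x <- U | x \notin c]).
  move=> Uc; rewrite cat_uniq Uc filter_uniq ?undup_uniq // andbT.
  by apply/hasPn => x; rewrite mem_filter => /andP [].
have memU c : {subset c <= U} -> c ++ [seq x <- U | x \notin c] =i U.
  by move=> cU x; rewrite mem_cat mem_filter; case: (boolP (x \in c)) => // /cU ->.
have src_tgt : src =i tgt.
  by move=> x; rewrite !memU // => y Hy; rewrite mem_undup mem_cat Hy ?orbT.
have Sst : size src = size tgt by apply/perm_size/uniq_perm; rewrite ?completeU.
exists (relabel src tgt); split.
  by exists (relabel tgt src); apply: relabelK; rewrite ?completeU.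
move=> k x0 Hk; have Hin : nth x0 a k \in src by rewrite mem_cat mem_nth.
rewrite /relabel Hin index_cat mem_nth // index_uniq // nth_cat -Sab Hk.
by apply: set_nth_default; rewrite -Sab.
Qed.

Lemma bij_transport (X T : eqType) (f g : X -> T) (r : seq X) :
  {in r &, forall x y, f x = f y <-> g x = g y} ->
  exists F : T -> T, bijective F /\ {in r, forall x, F (f x) = g x}.
Proof.
move=> fg; pose P := undup [seq (f x, g x) | x <- r].
have memP p : p \in P -> exists2 x, x \in r & p = (f x, g x).
  by rewrite mem_undup => /mapP.
have Ufst : uniq (map fst P).
  rewrite map_inj_in_uniq ?undup_uniq // => _ _ /memP [x Hx ->] /memP [y Hy ->] /= E.
  by rewrite E (proj1 (fg x y Hx Hy) E).
have Usnd : uniq (map snd P).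
  rewrite map_inj_in_uniq ?undup_uniq // => _ _ /memP [x Hx ->] /memP [y Hy ->] /= E.
  by rewrite E (proj2 (fg x y Hx Hy) E).
have [F [bijF EF]] := bij_of_uniq Ufst Usnd (etrans (size_map _ _) (esym (size_map _ _))).
exists F; split=> // x Hx; have HP : (f x, g x) \in P by rewrite mem_undup map_f.
have := EF (index (f x, g x) P) (f x); rewrite size_map index_mem => /(_ HP).
by rewrite !(nth_map (f x, g x)) ?index_mem // nth_index.
Qed.

Section TermInd.
Variables (X : Type) (P : term X -> Prop).
Hypothesis (P_Leaf : forall x, P (Leaf x)) (P_Fn : forall g ts, List.Forall P ts -> P (Fn g ts)).

Fixpoint term_nested_ind (t : term X) : P t :=
  match t with
  | Leaf x => P_Leaf x
  | Fn g ts => P_Fn g ((fix args ts := match ts return List.Forall P ts with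
                         | [::] => List.Forall_nil P
                         | t :: ts => List.Forall_cons t (term_nested_ind t) (args ts) end) ts)
  end.
End TermInd.

Lemma eq_map_Forall A B (f g : A -> B) s :
  List.Forall (fun x => f x = g x) s -> map f s = map g s.
Proof. by elim=> //= x l -> _ ->. Qed.

Lemma eq_tmap X Y (f g : X -> Y) : f =1 g -> tmap f =1 tmap g.
Proof.
move=> E; elim/term_nested_ind => /= [x|h ts IH]; first by rewrite E.
by rewrite (eq_map_Forall IH).
Qed.

Lemma tmap_id X (t : term X) : tmap id t = t.
Proof.
elim/term_nested_ind: t => //= h ts IH.
by rewrite (eq_map_Forall IH) map_id.
Qed.

Lemma tmap_comp X Y Z (f : X -> Y) (g : Y -> Z) t : tmap g (tmap f t) = tmap (g \o f) t.
Proof.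
elim/term_nested_ind: t => //= h ts IH.
by rewrite -map_comp (eq_map_Forall IH).
Qed.

Lemma subst_mterm (s : rvar -> term rvar) i t :
  subst s (mterm i t) = Fn t.1 [seq s (Some i, y) | y <- t.2].
Proof. by rewrite /= -map_comp. Qed.

Definition leaf_of X (d : X) (t : term X) : X := if t is Leaf x then x else d.

Lemma map_eq_Leaf (T : eqType) X (d : X) (f : T -> term X) s tup :
  map f s = map Leaf tup ->
  tup = map (leaf_of d \o f) s /\ {in s, forall z, f z = Leaf (leaf_of d (f z))}.
Proof.
elim: s tup => [|z s IH] [|x tup] //= [Ez /IH [-> Es]]; rewrite Ez; split=> // y.
by rewrite inE => /predU1P [->|/Es]; rewrite ?Ez.
Qed.

Lemma rename_rule_comp X Vn (f g : X -> X) (r : rule X Vn) :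
  rename_rule g (rename_rule f r) = rename_rule (g \o f) r.
Proof.
case: r => h b; rewrite /rename_rule /= -!map_comp; congr Rule.
  by apply: eq_map => t; rewrite /= tmap_comp.
apply: eq_map => a /=; rewrite -map_comp; congr pair.
by apply: eq_map => t; rewrite /= tmap_comp.
Qed.

Lemma rename_rule_id X Vn (f : X -> X) (r : rule X Vn) : f =1 id -> rename_rule f r = r.
Proof.
move=> E; case: r => h b; rewrite /rename_rule /=; congr Rule.
  by rewrite -[RHS]map_id; apply: eq_map => t; rewrite (eq_tmap E) tmap_id.
rewrite -[RHS]map_id; apply: eq_map => -[v ts] /=; rewrite -[in RHS](map_id ts).
by congr pair; apply: eq_map => t; rewrite (eq_tmap E) tmap_id.
Qed.

Lemma variant_sym X Vn (r1 r2 : rule X Vn) : variant r1 r2 -> variant r2 r1.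
Proof.
case=> f [[g fK gK] <-]; exists g; split; first by exists f.
by rewrite rename_rule_comp rename_rule_id.
Qed.

Lemma variant_trans X Vn (r1 r2 r3 : rule X Vn) :
  variant r1 r2 -> variant r2 r3 -> variant r1 r3.
Proof.
case=> f [f_bij <-] [g [g_bij <-]]; exists (g \o f); split; first exact: bij_comp.
by rewrite rename_rule_comp.
Qed.

Lemma rule_ans_variant X Vn ext (r1 r2 : rule X Vn) t :
  variant r1 r2 -> rule_ans ext r1 t -> rule_ans ext r2 t.
Proof.
case=> f [[g fK gK] <-] [nu [sat_nu ->]].
have tmap_nuK u : tmap (nu \o g) (tmap f u) = tmap nu u.
  by rewrite tmap_comp; apply: eq_tmap => x /=; rewrite fK.
exists (nu \o g); split; last by rewrite /= -map_comp; apply: eq_map => u /=; rewrite tmap_nuK.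
move=> _ /List.in_map_iff [a [<- Ha]] /=.
have [tup [ext_tup E]] := sat_nu a Ha; exists tup; split => //.
by rewrite -map_comp -E; apply: eq_map => u /=; rewrite tmap_nuK.
Qed.

(** * Matches and the rules of an unfolding *)

Definition atom0 : nat * seq nat := (0, [::]).

Lemma occurs_in_body (qb : seq (nat * seq nat)) x :
  x \in flatten [seq a.2 | a <- qb] ->
  exists i k, [/\ i < size qb, k < size (nth atom0 qb i).2 & nth 0 (nth atom0 qb i).2 k = x].
Proof.
case/flattenP => _ /mapP [a Ha ->] Hx.
exists (index a qb), (index x a.2); rewrite index_mem Ha nth_index //.
by rewrite index_mem Hx nth_index.
Qed.

Definition atom_match Vn (ext : Vn -> seq const -> Prop) (a : nat * seq nat) (m : mapping Vn)
    (th : nat -> term const) (nu : nat -> const) : Prop :=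
  [/\ mpred m = a.1,
      map th a.2 = [seq Fn t.1 [seq Leaf (nu y) | y <- t.2] | t <- mhead m]
    & ext (mview m) (map nu (mbody m))].

Section Unfolding.
Variables (Vn : Type) (m0 : mapping Vn) (q : cq).
Implicit Types (ms : seq (mapping Vn)) (s : rvar -> term rvar).

Local Notation atom i := (nth atom0 (qbody q) i).

Definition body_match ext ms th mu : Prop :=
  size ms = size (qbody q) /\
  forall i, i < size (qbody q) -> atom_match ext (atom i) (nth m0 ms i) th (mu i).

Lemma unifierP ms s : size ms = size (qbody q) ->
  unifier q ms s <->
  forall i, i < size (qbody q) ->
    mpred (nth m0 ms i) = (atom i).1 /\
    [seq s (None, v) | v <- (atom i).2] =
      [seq Fn t.1 [seq s (Some i, y) | y <- t.2] | t <- mhead (nth m0 ms i)].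
Proof.
move=> Hs; split => [Hu i Hi | Hu i a m Hi <- <-]; have Hi' : i < size ms by rewrite Hs.
  have [-> ->] := Hu i (atom i) (nth m0 ms i) Hi
    (set_nth_default atom0 _ Hi) (set_nth_default m0 _ Hi').
  by split=> //; apply: eq_map => t; rewrite subst_mterm.
rewrite (set_nth_default atom0) // (set_nth_default m0) //.
have [-> ->] := Hu i Hi; split=> //; apply: eq_map => t; exact/esym/subst_mterm.
Qed.

Lemma unifier_var ms s i k : size ms = size (qbody q) -> unifier q ms s ->
  i < size (qbody q) -> k < size (atom i).2 ->
  size (atom i).2 = size (mhead (nth m0 ms i)) /\
  s (None, nth 0 (atom i).2 k) =
    Fn (nth atom0 (mhead (nth m0 ms i)) k).1
       [seq s (Some i, y) | y <- (nth atom0 (mhead (nth m0 ms i)) k).2].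
Proof.
move=> Hs /(unifierP s Hs) Hu Hi Hk; have [_ E] := Hu i Hi.
have Esz := congr1 size E; rewrite !size_map in Esz; split=> //.
have := congr1 (nth (Leaf (None, 0)) ^~ k) E.
by rewrite (nth_map 0) // (nth_map atom0) // -Esz.
Qed.

Lemma match_var ext ms th mu i k : body_match ext ms th mu ->
  i < size (qbody q) -> k < size (atom i).2 ->
  size (atom i).2 = size (mhead (nth m0 ms i)) /\
  th (nth 0 (atom i).2 k) =
    Fn (nth atom0 (mhead (nth m0 ms i)) k).1
       [seq Leaf (mu i y) | y <- (nth atom0 (mhead (nth m0 ms i)) k).2].
Proof.
move=> [_ Hm] Hi Hk; have [_ E _] := Hm i Hi.
have Esz := congr1 size E; rewrite !size_map in Esz; split=> //.
have := congr1 (nth (Leaf 0) ^~ k) E.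
by rewrite (nth_map 0) // (nth_map atom0) // -Esz.
Qed.

Lemma zip_iota_nth T (x0 : T) (s : seq T) :
  zip (iota 0 (size s)) s = [seq (i, nth x0 s i) | i <- iota 0 (size s)].
Proof.
apply: (@eq_from_nth _ (0, x0)); first by rewrite size_zip size_map size_iota minnn.
move=> i; rewrite size_zip size_iota minnn => Hi.
by rewrite nth_zip ?size_iota // (nth_map 0) ?size_iota // nth_iota.
Qed.

Lemma In_gen_rule_body ms s a :
  List.In a (rbody (gen_rule q ms s)) <->
  exists2 i, i < size ms &
    a = (mview (nth m0 ms i), [seq s (Some i, z) | z <- mbody (nth m0 ms i)]).
Proof.
rewrite /= (zip_iota_nth m0) -map_comp List.in_map_iff.
split=> [[i [<- /InP]] | [i Hi ->]]; first by rewrite mem_iota => /andP [_ Hi]; exists i.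
by exists i; split=> //; apply/InP; rewrite mem_iota.
Qed.

Lemma body_sat_gen_rule ext nu ms s :
  body_sat ext nu (gen_rule q ms s) <->
  forall i, i < size ms -> exists tup, ext (mview (nth m0 ms i)) tup /\
    [seq tmap nu (s (Some i, z)) | z <- mbody (nth m0 ms i)] = map Leaf tup.
Proof.
split=> [sat i Hi | sat a /In_gen_rule_body [i Hi ->]]; last by rewrite /= -map_comp; exact: sat.
by have := sat _ (proj2 (In_gen_rule_body _ _ _) (ex_intro2 _ _ i Hi erefl)); rewrite /= -map_comp.
Qed.

Lemma gen_rule_ans_match ext ms s t :
  (forall m, List.In m ms -> mapping_wf m) -> size ms = size (qbody q) -> unifier q ms s ->
  rule_ans ext (gen_rule q ms s) t ->
  exists th mu, body_match ext ms th mu /\ t = map th (qhead q).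
Proof.
move=> wf Hs Hu [nu [/body_sat_gen_rule sat ->]].
pose th x := tmap nu (s (None, x)).
pose mu i z := leaf_of 0 (tmap nu (s (Some i, z))).
exists th, mu; split; last by rewrite /= -map_comp.
split=> // i Hi; have Hi' : i < size ms by rewrite Hs.
have [tup [ext_tup /(map_eq_Leaf 0) [Etup Leaf_mu]]] := sat i Hi'.
have [Hpred Eargs] := proj1 (unifierP s Hs) Hu i Hi.
split=> //; last by rewrite Etup in ext_tup.
rewrite (map_comp (tmap nu) (fun v => s (None, v))) Eargs -map_comp.
apply: eq_In_map => h Hh /=; rewrite -map_comp; congr Fn; apply/eq_in_map => y Hy /=.
exact/Leaf_mu/(wf _ (In_nth m0 Hi') h Hh).
Qed.

(* Ground terms are read as open terms by taking the constant [c] as the variable [(None, c)]. *)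
Definition match_subst (th : nat -> term const) (mu : nat -> nat -> const) (w : rvar) : term rvar :=
  match w with
  | (None, x) => tmap (pair None) (th x)
  | (Some i, z) => Leaf (None, mu i z)
  end.

Lemma match_unifier ext ms th mu : body_match ext ms th mu -> unifier q ms (match_subst th mu).
Proof.
move=> [Hs Hm]; apply/(unifierP _ Hs) => i Hi; have [-> E _] := Hm i Hi; split=> //.
rewrite (map_comp (tmap (pair None)) th) E -map_comp; apply: eq_map => t /=.
by rewrite -!map_comp.
Qed.

Lemma match_gen_rule_ans ext ms s th mu : mgu q ms s ->
  {subset qhead q <= flatten [seq a.2 | a <- qbody q]} ->
  body_match ext ms th mu -> rule_ans ext (gen_rule q ms s) (map th (qhead q)).
Proof.
move=> [Hu s_mg] head_vars Hmatch; have [Hs Hm] := Hmatch.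
have [rho Erho] := s_mg _ (match_unifier Hmatch).
pose nu w := leaf_of 0 (tmap snd (rho w)).
have nu_mu i z : tmap nu (s (Some i, z)) = Leaf (mu i z).
  by have := Erho (Some i, z); case: (s (Some i, z)) => //= w; rewrite /nu => <-.
exists nu; split.
  apply/body_sat_gen_rule => i; rewrite Hs => Hi; have [_ _ ext_mu] := Hm i Hi.
  exists (map (mu i) (mbody (nth m0 ms i))); split=> //.
  by rewrite -!map_comp; apply: eq_map => z /=.
rewrite /= -map_comp; apply/eq_in_map => x /head_vars /occurs_in_body [i [k [Hi Hk <-]]] /=.
have [_ ->] := unifier_var Hs Hu Hi Hk; have [_ ->] := match_var Hmatch Hi Hk.
by rewrite /= -map_comp; congr Fn; apply: eq_map => y /=.
Qed.

Definition unif_equiv ms (w w' : rvar) : Prop := forall s, unifier q ms s -> s w = s w'.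

Lemma unif_equiv_ex ms w : exists w', `[< unif_equiv ms w w' >].
Proof. by exists w; apply/asboolP. Qed.

Definition unif_rep ms w : rvar := xchoose (unif_equiv_ex ms w).

Lemma unif_rep_equiv ms w : unif_equiv ms w (unif_rep ms w).
Proof. exact/asboolP/(xchooseP (unif_equiv_ex ms w)). Qed.

Lemma unif_rep_eq ms w w' : unif_equiv ms w w' -> unif_rep ms w = unif_rep ms w'.
Proof.
move=> E; apply: eq_xchoose => z; apply/asboolP/asboolP => H s Hs.
  by rewrite -(E s Hs) (H s Hs).
by rewrite (E s Hs) (H s Hs).
Qed.

Definition first_atom (v : nat) : nat := find (fun a : nat * seq nat => v \in a.2) (qbody q).

Lemma first_atom_lt v :
  v \in flatten [seq a.2 | a <- qbody q] -> first_atom v < size (qbody q).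
Proof. by rewrite -has_find => /flattenP [_ /mapP [a Ha ->] Hv]; apply/hasP; exists a. Qed.

Lemma mem_first_atom v : first_atom v < size (qbody q) -> v \in (atom (first_atom v)).2.
Proof. by rewrite -has_find => /(nth_find atom0). Qed.

(* The mgu identifies exactly the variables that every unifier identifies, using a chosen
   representative of each class. *)
Definition canon_unifier ms (w : rvar) : term rvar :=
  match w with
  | (None, v) =>
      let i := first_atom v in
      if i < size (qbody q) then
        let t := nth atom0 (mhead (nth m0 ms i)) (index v (atom i).2) in
        Fn t.1 [seq Leaf (unif_rep ms (Some i, y)) | y <- t.2]
      else Leaf w
  | _ => Leaf (unif_rep ms w)
  end.

Lemma canon_unifier_var ms s1 i k : size ms = size (qbody q) -> unifier q ms s1 ->
  i < size (qbody q) -> k < size (atom i).2 ->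
  canon_unifier ms (None, nth 0 (atom i).2 k) =
    Fn (nth atom0 (mhead (nth m0 ms i)) k).1
       [seq Leaf (unif_rep ms (Some i, y)) | y <- (nth atom0 (mhead (nth m0 ms i)) k).2].
Proof.
move=> Hs Hu Hi Hk; set v := nth 0 _ k.
have Hi0 : first_atom v < size (qbody q).
  by apply: first_atom_lt; apply/flattenP; exists (atom i).2; [apply/map_f/mem_nth | apply/mem_nth].
have Hv0 := mem_first_atom Hi0; rewrite /= Hi0; set i0 := first_atom v; set k0 := index v _.
have Hk0 : k0 < size (atom i0).2 by rewrite index_mem.
have E s : unifier q ms s ->
    Fn (nth atom0 (mhead (nth m0 ms i0)) k0).1
       [seq s (Some i0, y) | y <- (nth atom0 (mhead (nth m0 ms i0)) k0).2] =
    Fn (nth atom0 (mhead (nth m0 ms i)) k).1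
       [seq s (Some i, y) | y <- (nth atom0 (mhead (nth m0 ms i)) k).2].
  move=> Hs'; have [_ <-] := unifier_var Hs Hs' Hi0 Hk0; rewrite nth_index //.
  by have [_ <-] := unifier_var Hs Hs' Hi Hk.
have [-> Eargs] := E _ Hu; congr Fn.
have Esz := congr1 size Eargs; rewrite !size_map in Esz.
apply: (@eq_from_nth _ (Leaf (None, 0))); rewrite !size_map // => l Hl.
rewrite !(nth_map 0) -?Esz //; congr Leaf; apply: unif_rep_eq => s Hs'.
have [_ /(congr1 (nth (Leaf (None, 0)) ^~ l))] := E _ Hs'.
by rewrite !(nth_map 0) -?Esz.
Qed.

Lemma mgu_canon_unifier ms s1 : size ms = size (qbody q) -> unifier q ms s1 ->
  mgu q ms (canon_unifier ms).
Proof.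
move=> Hs Hu; split.
  apply/(unifierP _ Hs) => i Hi; have [-> E] := proj1 (unifierP _ Hs) Hu i Hi; split=> //.
  have Esz := congr1 size E; rewrite !size_map in Esz.
  apply: (@eq_from_nth _ (Leaf (None, 0))); rewrite !size_map // => k Hk.
  by rewrite (nth_map 0) // (nth_map atom0) -?Esz // (canon_unifier_var Hs Hu).
move=> s Hs'; exists s => -[[i|] v] /=; first exact: unif_rep_equiv.
case: ifP => // Hi0; have Hv0 := mem_first_atom Hi0; set i0 := first_atom v; set k0 := index v _.
have Hk0 : k0 < size (atom i0).2 by rewrite index_mem.
have [_] := unifier_var Hs Hs' Hi0 Hk0; rewrite nth_index // => ->.
by rewrite /= -map_comp; congr Fn; apply: eq_map => y; exact: unif_rep_equiv.
Qed.

Lemma mgu_var_Leaf ms s d i y : size ms = size (qbody q) -> mgu q ms s ->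
  s (Some i, y) = Leaf (leaf_of d (s (Some i, y))).
Proof.
move=> Hs [Hu s_mg]; have [rho Erho] := s_mg _ (proj1 (mgu_canon_unifier Hs Hu)).
by move: (Erho (Some i, y)) => /=; case: (s (Some i, y)).
Qed.

Lemma mgu_kernel ms s s' w w' : mgu q ms s -> unifier q ms s' -> s w = s w' -> s' w = s' w'.
Proof. by case=> _ s_mg /s_mg [rho Erho] E; rewrite !Erho E. Qed.

Definition mapping_vars ms : seq rvar :=
  flatten [seq [seq (Some i, z) | z <- mbody (nth m0 ms i)] | i <- iota 0 (size ms)].

Lemma mapping_varsP ms w :
  reflect (exists i z, [/\ w = (Some i, z), i < size ms & z \in mbody (nth m0 ms i)])
          (w \in mapping_vars ms).
Proof.
apply: (iffP flattenP) => [[_ /mapP [i Hi ->] /mapP [z Hz ->]] | [i [z [-> Hi Hz]]]].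
  by exists i, z; split=> //; move: Hi; rewrite mem_iota.
by exists [seq (Some i, z) | z <- mbody (nth m0 ms i)]; apply: map_f => //; rewrite mem_iota.
Qed.

Lemma rename_gen_rule (F : rvar -> rvar) ms s1 s2 :
  (forall m, List.In m ms -> mapping_wf m) -> size ms = size (qbody q) ->
  {subset qhead q <= flatten [seq a.2 | a <- qbody q]} ->
  unifier q ms s1 -> unifier q ms s2 ->
  {in mapping_vars ms, forall w, tmap F (s1 w) = s2 w} ->
  rename_rule F (gen_rule q ms s1) = gen_rule q ms s2.
Proof.
move=> wf Hs head_vars Hu1 Hu2 EF; rewrite /rename_rule /=; congr Rule.
  rewrite -map_comp; apply/eq_in_map => x /head_vars /occurs_in_body [i [k [Hi Hk <-]]] /=.
  have [Esz ->] := unifier_var Hs Hu1 Hi Hk; have [_ ->] := unifier_var Hs Hu2 Hi Hk.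
  have Hi' : i < size ms by rewrite Hs.
  have Hk' : k < size (mhead (nth m0 ms i)) by rewrite -Esz.
  rewrite /= -map_comp; congr Fn; apply/eq_in_map => y Hy /=; apply: EF.
  apply/mapping_varsP; exists i, y; split=> //.
  exact: (wf _ (In_nth m0 Hi') _ (In_nth atom0 Hk')).
rewrite (zip_iota_nth m0) -!map_comp; apply/eq_in_map => i; rewrite mem_iota => /andP [_ Hi] /=.
rewrite -map_comp; congr pair; apply/eq_in_map => z Hz /=; apply: EF.
by apply/mapping_varsP; exists i, z.
Qed.

Lemma mgu_gen_rule_variant ms s1 s2 :
  (forall m, List.In m ms -> mapping_wf m) -> size ms = size (qbody q) ->
  {subset qhead q <= flatten [seq a.2 | a <- qbody q]} ->
  mgu q ms s1 -> mgu q ms s2 -> variant (gen_rule q ms s1) (gen_rule q ms s2).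
Proof.
(* Both mgus send mapping variables to variables and identify the same ones, so they differ by a
   renaming, which extends to a bijection. *)
move=> wf Hs head_vars mgu1 mgu2; pose d : rvar := (None, 0).
have var_Leaf s w : mgu q ms s -> w \in mapping_vars ms -> s w = Leaf (leaf_of d (s w)).
  by move=> Hmgu /mapping_varsP [i [z [-> _ _]]]; exact: mgu_var_Leaf Hs Hmgu.
have kernel : {in mapping_vars ms &, forall w w',
    leaf_of d (s1 w) = leaf_of d (s1 w') <-> leaf_of d (s2 w) = leaf_of d (s2 w')}.
  move=> w w' Hw Hw'.
  have leafE s : mgu q ms s -> leaf_of d (s w) = leaf_of d (s w') <-> s w = s w'.
    move=> Hm; split=> [E|->] //.
    by rewrite (var_Leaf s w Hm Hw) (var_Leaf s w' Hm Hw') E.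
  rewrite (leafE _ mgu1) (leafE _ mgu2).
  by split; [apply: mgu_kernel mgu1 (proj1 mgu2) | apply: mgu_kernel mgu2 (proj1 mgu1)].
have [F [bijF EF]] := bij_transport kernel.
exists F; split=> //; apply: rename_gen_rule (proj1 mgu1) (proj1 mgu2) _ => // w Hw.
by rewrite (var_Leaf _ w mgu1 Hw) (var_Leaf _ w mgu2 Hw) /= -EF.
Qed.

End Unfolding.

(** * Wrapping *)

Lemma sig_head_shape off fs : [seq (t.1, size t.2) | t <- sig_head off fs] = fs.
Proof. by elim: fs off => //= -[g a] fs IH off /=; rewrite size_iota IH. Qed.

Lemma sig_head_vars off fs t : List.In t (sig_head off fs) ->
  {subset t.2 <= iota off (sumn [seq p.2 | p <- fs])}.
Proof.
elim: fs off => //= -[g a] fs IH off /= [<-|/IH sub] y /=; rewrite mem_iota.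
  by rewrite mem_iota => /andP [-> /leq_trans]; apply; rewrite leq_add2l leq_addr.
by move/sub; rewrite mem_iota addnA => /andP [/(leq_trans (leq_addr _ _)) ->].
Qed.

Lemma wrap_mapping_wf s : mapping_wf (wrap_mapping s).
Proof. by move=> t /sig_head_vars. Qed.

Definition head_args (m : mapping nat) : seq nat := flatten [seq t.2 | t <- mhead m].

Lemma sig_head_inst (h : seq (nat * seq nat)) off (mu nu : nat -> const) :
  map mu (iota off (sumn [seq p.2 | p <- [seq (t.1, size t.2) | t <- h]])) =
    map nu (flatten [seq t.2 | t <- h]) ->
  [seq Fn t.1 [seq Leaf (mu y) | y <- t.2] | t <- sig_head off [seq (t.1, size t.2) | t <- h]] =
  [seq Fn t.1 [seq Leaf (nu y) | y <- t.2] | t <- h].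
Proof.
elim: h off => //= -[g ys] h IH off /=.
rewrite iotaD !map_cat => /eqP; rewrite eqseq_cat ?size_map ?size_iota //.
case/andP => /eqP E1 /eqP /IH ->; congr (Fn _ _ :: _).
by rewrite (map_comp Leaf mu) E1 -map_comp.
Qed.

Definition term_shape (u : term const) : nat * nat :=
  if u is Fn g ts then (g, size ts) else (0, 0).

Lemma sig_head_inst_shape fs (mu : nat -> const) :
  map term_shape [seq Fn t.1 [seq Leaf (mu y) | y <- t.2] | t <- sig_head 0 fs] = fs.
Proof.
by rewrite -map_comp -[RHS](sig_head_shape 0 fs); apply: eq_map => t /=; rewrite size_map.
Qed.

Lemma In_wrapM M w :
  List.In w (wrapM M) <-> exists m, List.In m M /\ w = wrap_mapping (sign m).
Proof.
split=> [/List.in_map_iff [sg [<- /InP]] | [m [Hm ->]]].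
  by rewrite mem_undup => /InP /List.in_map_iff [m [<- Hm]]; exists m.
by apply/List.in_map; apply/InP; rewrite mem_undup; apply/InP/List.in_map.
Qed.

Definition mapping_nat0 : mapping nat := Mapping 0 [::] 0 [::].
Definition mapping_sig0 : mapping signature := wrap_mapping (0, [::]).

Section Wrap.
Variables (vdef : view_defs) (D : instance) (M : seq (mapping nat)) (q : cq).
Local Notation base := (base_ext vdef D).
Local Notation wrapped := (wrap_ext vdef D M).

Lemma atom_match_wrap a m th nu : List.In m M -> atom_match base a m th nu ->
  atom_match wrapped a (wrap_mapping (sign m)) th (nth 0 (map nu (head_args m))).
Proof.
move=> Hm [Hpred Eargs ext_nu].
have Einst : map (nth 0 (map nu (head_args m)))
    (iota 0 (sumn [seq p.2 | p <- [seq (t.1, size t.2) | t <- mhead m]])) = map nu (head_args m).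
  rewrite -[RHS](mkseq_nth 0); congr mkseq.
  by rewrite size_map size_flatten /shape -!map_comp.
split=> //=; first by rewrite Eargs; apply/esym/sig_head_inst.
by exists m; split=> //; split=> //; exists nu.
Qed.

Lemma atom_match_unwrap a sg th nu : atom_match wrapped a (wrap_mapping sg) th nu ->
  exists m nu', List.In m M /\ atom_match base a m th nu'.
Proof.
case=> /= Hpred Eargs [m [Hm [Hsg [nu' [view_nu' Etup]]]]]; subst sg.
exists m, nu'; split=> //; split=> //.
by rewrite Eargs; apply: sig_head_inst; rewrite -Etup.
Qed.

Lemma atom_match_wrap_sign ext a s1 s2 th1 th2 nu1 nu2 : map th1 a.2 = map th2 a.2 ->
  atom_match ext a (wrap_mapping s1) th1 nu1 -> atom_match ext a (wrap_mapping s2) th2 nu2 ->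
  s1 = s2.
Proof.
move=> Eth [/= P1 E1 _] [/= P2 E2 _].
have shapeE fs th (nu : nat -> const) :
    map th a.2 = [seq Fn t.1 [seq Leaf (nu y) | y <- t.2] | t <- sig_head 0 fs] ->
    fs = map term_shape (map th a.2).
  by move=> ->; rewrite sig_head_inst_shape.
move: P1 P2 E1 E2; case: s1 => L1 fs1; case: s2 => L2 fs2 /= -> -> /shapeE -> /shapeE ->.
by rewrite Eth.
Qed.

Lemma match_wrap ms th mu : adm_tuple M q ms -> body_match mapping_nat0 q base ms th mu ->
  exists ws mu', adm_tuple (wrapM M) q ws /\ body_match mapping_sig0 q wrapped ws th mu'.
Proof.
move=> [Hs inM] [_ Hm].
exists [seq wrap_mapping (sign m) | m <- ms].
exists (fun i => nth 0 (map (mu i) (head_args (nth mapping_nat0 ms i)))).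
split; split; rewrite ?size_map //.
  by move=> _ /List.in_map_iff [m [<- Hm']]; apply/In_wrapM; exists m; split; first exact: inM.
move=> i Hi; have Hi' : i < size ms by rewrite Hs.
rewrite (nth_map mapping_nat0) //.
by apply: atom_match_wrap; [exact: inM (In_nth _ Hi') | exact: Hm].
Qed.

Lemma match_unwrap ws th mu :
  adm_tuple (wrapM M) q ws -> body_match mapping_sig0 q wrapped ws th mu ->
  exists ms mu', adm_tuple M q ms /\ body_match mapping_nat0 q base ms th mu'.
Proof.
move=> [Hs inW] [_ Hm].
have pick i : exists p : mapping nat * (nat -> const), i < size (qbody q) ->
    List.In p.1 M /\ atom_match base (nth atom0 (qbody q) i) p.1 th p.2.
  case: (ltnP i (size (qbody q))) => Hi; last by exists (mapping_nat0, fun _ => 0).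
  have Hi' : i < size ws by rewrite Hs.
  have [m [_ Ew]] := proj1 (In_wrapM _ _) (inW _ (In_nth mapping_sig0 Hi')).
  by have := Hm i Hi; rewrite Ew => /atom_match_unwrap [m' [nu' Hm']]; exists (m', nu').
case/choice: pick => f Hf.
exists (mkseq (fun i => (f i).1) (size (qbody q))), (fun i => (f i).2).
split; split; rewrite ?size_mkseq //.
  move=> m /List.in_map_iff [i [<- /InP]]; rewrite mem_iota => /andP [_ Hi].
  exact: (Hf i Hi).1.
by move=> i Hi; rewrite nth_mkseq //; exact: (Hf i Hi).2.
Qed.

Lemma wrap_match_unique ext ws1 ws2 th1 th2 mu1 mu2 :
  adm_tuple (wrapM M) q ws1 -> adm_tuple (wrapM M) q ws2 ->
  body_match mapping_sig0 q ext ws1 th1 mu1 -> body_match mapping_sig0 q ext ws2 th2 mu2 ->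
  {in flatten [seq a.2 | a <- qbody q], th1 =1 th2} -> ws1 = ws2.
Proof.
move=> [Hs1 in1] [Hs2 in2] [_ Hm1] [_ Hm2] Eth.
apply: (@eq_from_nth _ mapping_sig0) => [|i]; first by rewrite Hs1 Hs2.
rewrite Hs1 => Hi; have Hi1 : i < size ws1 by rewrite Hs1.
have Hi2 : i < size ws2 by rewrite Hs2.
have [m1 [_ E1]] := proj1 (In_wrapM _ _) (in1 _ (In_nth mapping_sig0 Hi1)).
have [m2 [_ E2]] := proj1 (In_wrapM _ _) (in2 _ (In_nth mapping_sig0 Hi2)).
have Eargs : map th1 (nth atom0 (qbody q) i).2 = map th2 (nth atom0 (qbody q) i).2.
  apply/eq_in_map => x Hx; apply: Eth; apply/flattenP.
  by exists (nth atom0 (qbody q) i).2 => //; apply/map_f/mem_nth.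
have := Hm1 i Hi; have := Hm2 i Hi; rewrite E1 E2 => Hw2 Hw1.
by rewrite (atom_match_wrap_sign Eargs Hw1 Hw2).
Qed.

End Wrap.

Lemma wrapM_wf M w : List.In w (wrapM M) -> mapping_wf w.
Proof. by move/In_wrapM => [m [_ ->]]; exact: wrap_mapping_wf. Qed.

Section UnfoldingAnswers.
Variables (Vn : Type) (m0 : mapping Vn) (q : cq) (M : seq (mapping Vn)) (Pi : seq (rule rvar Vn)).
Hypotheses (wfM : forall m, List.In m M -> mapping_wf m) (unfM : is_unfolding M q Pi).

Lemma unfolding_rule_ans ext r t : List.In r Pi -> rule_ans ext r t ->
  exists ms s th mu, [/\ adm_tuple M q ms, mgu q ms s, variant r (gen_rule q ms s),
    body_match m0 q ext ms th mu & t = map th (qhead q)].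
Proof.
move=> Hr Ht; have [ms [s [adm [Hmgu Hv]]]] := unfM.2.1 r Hr.
have wf m : List.In m ms -> mapping_wf m by move/adm.2; exact: wfM.
have [th [mu [Hm ->]]] := gen_rule_ans_match m0 wf adm.1 Hmgu.1 (rule_ans_variant Hv Ht).
by exists ms, s, th, mu.
Qed.

Lemma dl_ans_unfoldingP ext t : {subset qhead q <= flatten [seq a.2 | a <- qbody q]} ->
  dl_ans ext Pi t <->
  exists ms th mu, [/\ adm_tuple M q ms, body_match m0 q ext ms th mu & t = map th (qhead q)].
Proof.
move=> head_vars; split=> [[r [Hr /(unfolding_rule_ans Hr)]] | [ms [th [mu [adm Hm ->]]]]].
  by case=> ms [s [th [mu [adm _ _ Hm ->]]]]; exists ms, th, mu.
have Hmgu := mgu_canon_unifier m0 adm.1 (match_unifier Hm).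
have [r [Hr Hv]] := unfM.1 _ _ adm Hmgu.
exists r; split=> //; apply: rule_ans_variant (variant_sym Hv) _.
exact: match_gen_rule_ans Hmgu head_vars Hm.
Qed.

End UnfoldingAnswers.

(** * Finiteness and counting *)

Fixpoint tuples T (E : seq T) n : seq (seq T) :=
  if n is n'.+1 then [seq x :: s | x <- E, s <- tuples E n'] else [:: [::]].

Lemma mem_tuples (T : eqType) (E : seq T) s : all (mem E) s -> s \in tuples E (size s).
Proof.
elim: s => [|x s IH] /=; first by rewrite inE.
by case/andP => Hx Hs; apply: allpairs_f => //; apply: IH.
Qed.

Section Candidates.
Variables (vdef : view_defs) (D : instance) (M : seq (mapping nat)) (q : cq).
Hypothesis wfM : forall m, List.In m M -> mapping_wf m.

Definition view_consts : seq const := flatten (flatten [seq vdef (mview m) D | m <- M]).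

Definition head_instances : seq (term const) :=
  flatten [seq [seq Fn t.1 (map Leaf cs) | cs <- tuples view_consts (size t.2)]
          | t <- flatten [seq mhead m | m <- M]].

Definition answer_candidates : seq (seq (term const)) :=
  tuples head_instances (size (qhead q)).

Lemma match_var_instance ms th mu x : adm_tuple M q ms ->
  body_match mapping_nat0 q (base_ext vdef D) ms th mu ->
  x \in flatten [seq a.2 | a <- qbody q] -> th x \in head_instances.
Proof.
move=> [Hs inM] Hm /occurs_in_body [i [k [Hi Hk <-]]].
have Hi' : i < size ms by rewrite Hs.
set m := nth mapping_nat0 ms i; have Hm_in : List.In m M by apply/inM/In_nth.
have [Esz ->] := match_var Hm Hi Hk; set t := nth atom0 (mhead m) k.
have Ht : t \in mhead m by rewrite mem_nth // -Esz.
apply/flattenP; exists [seq Fn t.1 (map Leaf cs) | cs <- tuples view_consts (size t.2)].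
  by apply/map_f/flattenP; exists (mhead m) => //; apply/InP; exact: List.in_map.
rewrite (map_comp Leaf (mu i)); apply/map_f; rewrite -(size_map (mu i)); apply: mem_tuples.
apply/allP => _ /mapP [y Hy ->]; have [_ _ view_mu] := (proj2 Hm) i Hi.
apply/flattenP; exists (map (mu i) (mbody m)); last by apply/map_f/(wfM Hm_in (InP _ _ Ht)).
by apply/flattenP; exists (vdef (mview m) D) => //; apply/InP; exact: List.in_map.
Qed.

Lemma match_answer_candidate ms th mu : adm_tuple M q ms ->
  body_match mapping_nat0 q (base_ext vdef D) ms th mu ->
  {subset qhead q <= flatten [seq a.2 | a <- qbody q]} -> map th (qhead q) \in answer_candidates.
Proof.
move=> adm Hm head_vars; rewrite /answer_candidates -(size_map th); apply: mem_tuples.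
by apply/allP => _ /mapP [x /head_vars Hx ->]; exact: match_var_instance adm Hm Hx.
Qed.

End Candidates.

Lemma card_is_filter (T : eqType) (A : T -> Prop) (U : seq T) :
  (forall t, A t -> t \in U) -> card_is A (count (fun t => `[< A t >]) (undup U)).
Proof.
move=> AU; exists [seq t <- undup U | `[< A t >]]; split; first by rewrite filter_uniq ?undup_uniq.
split; last by rewrite size_filter.
move=> t; rewrite mem_filter mem_undup; split=> [At | /andP [/asboolP] //].
by rewrite AU // andbT; apply/asboolP.
Qed.

Lemma sum_disjoint_indicators R T (B : R -> T -> Prop) (l : seq R) t :
  List.ForallOrdPairs (fun r1 r2 => forall t, B r1 t -> B r2 t -> False) l ->
  \sum_(r <- l) `[< B r t >] = `[< exists r, List.In r l /\ B r t >].
Proof.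
elim=> {l} [|r l disj_r _ IH]; first by rewrite big_nil; case: asboolP => // -[? []].
rewrite big_cons IH; case: (asboolP (B r t)) => [Br | nBr].
  have -> : `[< exists r', List.In r' l /\ B r' t >] = false.
    apply/asboolP => -[r' [Hr' Br']].
    by move/List.Forall_forall: disj_r => /(_ r' Hr' t Br Br').
  by case: asboolP => // nE; case: nE; exists r; split; [left|].
congr nat_of_bool; apply/asboolP/asboolP => [[r' [Hr' Br']] | [r' [[<- // | Hr'] Br']]].
  by exists r'; split; [right|].
by exists r'.
Qed.

Lemma card_is_disjoint_union (T : eqType) R (A : T -> Prop) (B : R -> T -> Prop)
    (l : seq R) (U : seq T) :
  (forall t, A t -> t \in U) ->
  (forall t, A t <-> exists r, List.In r l /\ B r t) ->
  List.ForallOrdPairs (fun r1 r2 => forall t, B r1 t -> B r2 t -> False) l ->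
  exists (n : nat) (nr : R -> nat),
    card_is A n /\ (forall r, List.In r l -> card_is (B r) (nr r)) /\ n = \sum_(r <- l) nr r.
Proof.
move=> AU AB disj.
exists (count (fun t => `[< A t >]) (undup U)), (fun r => count (fun t => `[< B r t >]) (undup U)).
split; first exact: card_is_filter.
split; first by move=> r Hr; apply: card_is_filter => t Bt; apply/AU/AB; exists r.
elim: (undup U) => [|t U' IH] /=; first by rewrite big1.
rewrite big_split /= -IH sum_disjoint_indicators //; congr (nat_of_bool _ + _).
by apply/asboolP/asboolP => /AB.
Qed.

Lemma wrap_unfolding_variant vdef D M q (Pi' : seq (rule rvar signature)) r1 r2 t :
  qhead q =i flatten [seq a.2 | a <- qbody q] -> is_unfolding (wrapM M) q Pi' ->
  List.In r1 Pi' -> List.In r2 Pi' ->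
  rule_ans (wrap_ext vdef D M) r1 t -> rule_ans (wrap_ext vdef D M) r2 t -> variant r1 r2.
Proof.
move=> head_eq unfW Hr1 Hr2 Ht1 Ht2.
have ans := unfolding_rule_ans mapping_sig0 (@wrapM_wf M) unfW.
have [ws [s1 [th1 [mu1 [adm1 mgu1 v1 Hm1 E1]]]]] := ans _ _ _ Hr1 Ht1.
have [ws2 [s2 [th2 [mu2 [adm2 mgu2 v2 Hm2 E2]]]]] := ans _ _ _ Hr2 Ht2.
have Ews : ws = ws2.
  have Eth : {in qhead q, th1 =1 th2} by apply/eq_in_map; rewrite -E1 -E2.
  by apply: wrap_match_unique adm1 adm2 Hm1 Hm2 _ => x; rewrite -head_eq; exact: Eth.
subst ws2; apply: variant_trans v1 (variant_trans _ (variant_sym v2)).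
apply: (mgu_gen_rule_variant mapping_sig0) adm1.1 _ mgu1 mgu2 => [m /adm1.2 /wrapM_wf | x] //.
by rewrite head_eq.
Qed.

Theorem theorem5 (ar : nat -> nat) (vdef : view_defs) (D : instance)
    (M : seq (mapping nat)) (q : cq)
    (Pi : seq (rule rvar nat)) (Pi' : seq (rule rvar signature)) :
  (* concept and role names have arity 1 or 2 *)
  (forall L, ar L = 1 \/ ar L = 2) ->
  (forall m, List.In m M -> mapping_wf m /\ size (mhead m) = ar (mpred m)) ->
  (forall a, List.In a (qbody q) -> size a.2 = ar a.1) ->
  (* x = \bigcup_i v_i as sets of variables *)
  qhead q =i flatten [seq a.2 | a <- qbody q] ->
  is_unfolding M q Pi ->
  is_unfolding (wrapM M) q Pi' ->
  exists (nL : nat) (nr : rule rvar signature -> nat),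
    card_is (dl_ans (base_ext vdef D) Pi) nL /\
    (forall r, List.In r Pi' -> card_is (rule_ans (wrap_ext vdef D M) r) (nr r)) /\
    nL = \sum_(r <- Pi') nr r.
Proof.
move=> _ HM _ head_eq unfM unfW.
have head_vars : {subset qhead q <= flatten [seq a.2 | a <- qbody q]} by move=> x; rewrite head_eq.
have wfM m : List.In m M -> mapping_wf m by case/HM.
have ansM := dl_ans_unfoldingP mapping_nat0 wfM unfM _ _ head_vars.
have ansW := dl_ans_unfoldingP mapping_sig0 (@wrapM_wf M) unfW _ _ head_vars.
apply: (card_is_disjoint_union (U := answer_candidates vdef D M q)).
- by move=> t /ansM [ms [th [mu [adm Hm ->]]]]; have := match_answer_candidate wfM adm Hm head_vars.
- move=> t; rewrite ansM -[X in _ <-> X]/(dl_ans _ Pi' t) ansW.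
  split=> [[ms [th [mu [adm Hm ->]]]] | [ws [th [mu [adm Hm ->]]]]].
    by have [ws [mu' [adm' Hm']]] := match_wrap adm Hm; exists ws, th, mu'.
  by have [ms [mu' [adm' Hm']]] := match_unwrap adm Hm; exists ms, th, mu'.
- apply: ForallOrdPairs_impl_In unfW.2.2 => r1 r2 Hr1 Hr2 not_variant t Ht1 Ht2.
  exact/not_variant/(wrap_unfolding_variant head_eq unfW Hr1 Hr2 Ht1 Ht2).
Qed.
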